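(* Let $R\subset S$ be a pointwise minimal ring extension. Then $\mathcal S[R,S]=S$, so that $\pounds[R,S]=1$.
   Context: All rings are commutative with identity. $[R,S]$ is the set of $R$-subalgebras of $S$; $T\subset U$ is minimal if $[T,U]=\{T,U\}$. An atom of $[R,S]$ is $T$ with $R\subset T$ minimal; the socle $\mathcal S[R,S]$ is the product (compositum) of all atoms. The Loewy series is $S_0=R$, $S_{i+1}=\mathcal S[S_i,S]$ while $S_i\neq S$, and $\pounds[R,S]$ is the least $n$ with $S_n=S$. $R\subset S$ is pointwise minimal if $R\subset R[x]$ is minimal for each $x\in S\setminus R$. *)

From mathcomp Require Import all_boot all_algebra.
Set Implicit Arguments. Unset Strict Implicit. Unset Printing Implicit Defensive.
Import GRing.Theory.
Local Open Scope ring_scope.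

(* A ring extension R ⊂ S is modelled by a commutative ring S together with a
   subring R of S given as a predicate on S.  R-subalgebras of S are then the
   subrings of S containing R. *)
Section RingExt.
Variable S : comNzRingType.

Definition is_subring (T : S -> Prop) : Prop :=
  [/\ T 1, (forall x y, T x -> T y -> T (x - y)) & (forall x y, T x -> T y -> T (x * y))].

Definition incl (T U : S -> Prop) : Prop := forall x, T x -> U x.
Definition same (T U : S -> Prop) : Prop := forall x, T x <-> U x.

Definition in_interval (R T : S -> Prop) : Prop := is_subring T /\ incl R T.

Definition gen (A : S -> Prop) : S -> Prop :=
  fun y => forall T, is_subring T -> incl A T -> T y.

Definition adjoin (R : S -> Prop) (x : S) : S -> Prop :=
  gen (fun y => R y \/ y = x).

Definition minimal (T U : S -> Prop) : Prop :=
  [/\ incl T U, ~ incl U T &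
      forall V, is_subring V -> incl T V -> incl V U -> same V T \/ same V U].

Definition atom (R T : S -> Prop) : Prop := in_interval R T /\ minimal R T.

(* socle: compositum of all atoms (R itself if there are none) *)
Definition socle (R : S -> Prop) : S -> Prop :=
  gen (fun y => R y \/ exists T, atom R T /\ T y).

(* Loewy series S_0 = R, S_{i+1} = socle[S_i, S] (once S_i = S it stays S) *)
Fixpoint loewy (R : S -> Prop) (n : nat) : S -> Prop :=
  match n with
  | 0 => R
  | n.+1 => socle (loewy R n)
  end.

Definition full (T : S -> Prop) : Prop := forall x, T x.

(* £[R,S] = n : n is the least index with S_n = S *)
Definition loewy_length_is (R : S -> Prop) (n : nat) : Prop :=
  full (loewy R n) /\ forall m, (m < n)%N -> ~ full (loewy R m).

Definition proper_ext (R : S -> Prop) : Prop := exists x, ~ R x.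

Definition pointwise_minimal (R : S -> Prop) : Prop :=
  forall x, ~ R x -> minimal R (adjoin R x).

End RingExt.

From mathcomp Require Import all_boot all_algebra.
From Stdlib Require Import Classical.
Set Implicit Arguments.

(* Each x outside R lies in R[x], which is an atom of [R,S] by pointwise
   minimality, so the compositum of the atoms is all of S.  Since R <> S, the
   Loewy series therefore reaches S after exactly one step. *)

Section PointwiseMinimalSocle.
Variable S : comNzRingType.
Implicit Types (A R : S -> Prop) (x : S).

Lemma gen_subring A : is_subring (gen A).
Proof.
split.
- by move=> T [].
- by move=> x y hx hy T hT hA; case: (hT) => _ hB _; apply: hB; [exact: hx | exact: hy].
- by move=> x y hx hy T hT hA; case: (hT) => _ _ hM; apply: hM; [exact: hx | exact: hy].
Qed.

Lemma gen_incl A : incl A (gen A).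
Proof. by move=> x hx T _ hA; apply: hA. Qed.

Lemma adjoin_mem R x : adjoin R x x.
Proof. by apply: gen_incl; right. Qed.

Lemma adjoin_in_interval R x : in_interval R (adjoin R x).
Proof. by split; [exact: gen_subring | move=> y hy; apply: gen_incl; left]. Qed.

Lemma pointwise_minimal_atom R x :
  pointwise_minimal R -> ~ R x -> atom R (adjoin R x).
Proof. by move=> hpm hx; split; [exact: adjoin_in_interval | exact: hpm]. Qed.

Lemma pointwise_minimal_socle_full R : pointwise_minimal R -> full (socle R).
Proof.
move=> hpm x; apply: gen_incl.
have [hx | hx] := classic (R x); first by left.
by right; exists (adjoin R x); split; [exact: pointwise_minimal_atom | exact: adjoin_mem].
Qed.

Lemma loewy_length_is1 R : proper_ext R -> full (socle R) -> loewy_length_is R 1.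
Proof. by move=> [x hx] hfull; split=> // -[|//] _ /(_ x). Qed.

End PointwiseMinimalSocle.

Theorem proposition8p312 (S : comNzRingType) (R : S -> Prop)
  (hR : is_subring R) (hprop : proper_ext R) (hpm : pointwise_minimal R) :
  full (socle R) /\ loewy_length_is R 1.
Proof.
have hfull := pointwise_minimal_socle_full hpm.
by split; last exact: loewy_length_is1.
Qed.
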